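(* Let $n\ge1$ and let $\chi$ be a character of $S_n$. Then $d_\chi^{S_n}(AB)=d_\chi^{S_n}(BA)$ for all $A,B\in\mathbb S_n(\mathbb C)$.
   Context: A character of $S_n$ is a function $g\mapsto\operatorname{tr}(\rho(g))$ for some homomorphism $\rho:S_n\to GL_m(\mathbb C)$, $m\ge1$. $\mathbb S_n(\mathbb C)$ is the set of complex symmetric $n\times n$ matrices. $d_\chi^{S_n}(A)=\sum_{\sigma\in S_n}\chi(\sigma)\prod_{i=1}^n A_{i\,\sigma(i)}$. *)

From HB Require Import structures.
From mathcomp Require Import all_boot all_order all_algebra all_fingroup all_character.
Set Implicit Arguments. Unset Strict Implicit. Unset Printing Implicit Defensive.
Import GRing.Theory Num.Theory.
Local Open Scope ring_scope.

(* A character of S_n (over the field C): g |-> tr(rho g) for a group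
   homomorphism rho : S_n -> GL_m(C), m >= 1. A matrix representation
   (rho 1 = 1, rho multiplicative) automatically has invertible values. *)
Definition is_character_Sn (C : fieldType) (n : nat) (chi : 'S_n -> C) : Prop :=
  exists m : nat, (0 < m)%N /\
    exists rho : mx_representation C [set: 'S_n] m,
      forall g : 'S_n, chi g = \tr (rho g).

Definition immanant (C : fieldType) (n : nat) (chi : 'S_n -> C) (A : 'M[C]_n) : C :=
  \sum_(s : 'S_n) chi s * \prod_(i < n) A i (s i).

Definition symmetric_mx (C : fieldType) (n : nat) (A : 'M[C]_n) : Prop := A^T = A.

(* Transposition replaces the permutation s by s^-1 in each term of an
   immanant, and (AB)^T = BA for symmetric A and B.  So it suffices that
   characters of S_n satisfy chi(s^-1) = chi(s), which holds because s^-1 is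
   conjugate to s: the conjugating permutation reflects every cycle
   (r, s r, ..., s^(o-1) r) of s through its base point r, sending s^k r to
   s^-k r. *)

From HB Require Import structures.
From mathcomp Require Import all_boot all_order all_algebra all_fingroup all_character.
Set Implicit Arguments. Unset Strict Implicit. Unset Printing Implicit Defensive.

Local Open Scope group_scope.

Lemma permVX_eq (T : finType) (t : {perm T}) a b z :
  (t ^+ a) z = (t ^+ b) z -> (t ^- a) z = (t ^- b) z.
Proof.
move=> eq_ab; have commVX : t ^- a * t ^- b = t ^- b * t ^- a.
  by rewrite -!invMg -!expgD addnC.
by rewrite -[in LHS](permK (t ^+ b) z) -eq_ab -permM -commVX permM permK.
Qed.

Section MirrorCycles.

Variables (T : finType) (s : {perm T}) (base : T -> T) (idx : T -> nat).
Hypotheses (base_perm : forall x, base (s x) = base x)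
           (expg_base : forall x, (s ^+ idx x) (base x) = x).

Definition mirror x := (s ^- idx x) (base x).

Lemma base_cycle t x : t \in <[s]> -> base (t x) = base x.
Proof.
case/cycleP=> n ->{t}; elim: n => [|n IHn]; first by rewrite perm1.
by rewrite expgSr permM base_perm.
Qed.

Lemma base_mirror x : base (mirror x) = base x.
Proof.
rewrite base_cycle ?groupV ?groupX ?cycle_id //.
by rewrite -{2}(expg_base x) base_cycle ?groupX ?cycle_id.
Qed.

Lemma mirror_perm x : mirror (s x) = s^-1 (mirror x).
Proof.
have eq_idx : (s ^+ idx (s x)) (base x) = (s ^+ (idx x).+1) (base x).
  by rewrite -{1}base_perm expg_base expgSr permM expg_base.
by rewrite /mirror base_perm (permVX_eq eq_idx) expgS invMg permM.
Qed.

Lemma mirror_inj : injective mirror.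
Proof.
move=> x y eq_xy; have eq_base : base x = base y.
  by rewrite -base_mirror eq_xy base_mirror.
move: eq_xy; rewrite /mirror -eq_base -!expgVn => /permVX_eq.
by rewrite !expgVn !invgK {1}expg_base eq_base expg_base.
Qed.

Lemma conjg_mirror : s ^ perm mirror_inj = s^-1.
Proof.
apply/permP => x; rewrite conjgE !permM -[x in RHS](permKV (perm mirror_inj)).
by rewrite !(@permE _ mirror) mirror_perm.
Qed.

End MirrorCycles.

Lemma perm_conj_invg (T : finType) (s : {perm T}) :
  exists h : {perm T}, s ^ h = s^-1.
Proof.
have sym_s : connect_sym (frel s) := fconnect_sym (@perm_inj _ s).
have root_to x : fconnect s (froot s x) x by rewrite sym_s connect_root.
pose idx x := findex s (froot s x) x.
have base_perm x : froot s (s x) = froot s x.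
  by apply/esym/(fingraph.rootP sym_s); apply: fconnect1.
have expg_base x : (s ^+ idx x) (froot s x) = x.
  by rewrite permX iter_findex.
by exists (perm (mirror_inj base_perm expg_base)); apply: conjg_mirror.
Qed.

Local Open Scope ring_scope.

Lemma mxtrace_repr_conjg (F : fieldType) (gT : finGroupType) (G : {group gT})
    (m : nat) (rho : mx_representation F G m) :
  {in G &, forall x y, \tr (rho (x ^ y)%g) = \tr (rho x)}.
Proof.
move=> x y Gx Gy; rewrite conjgE !repr_mxM ?groupM ?groupV // mxtrace_mulC.
by rewrite -mulmxA -repr_mxM ?groupV // mulgV repr_mx1 mulmx1.
Qed.

Lemma character_Sn_invg (C : fieldType) (n : nat) (chi : 'S_n -> C) :
  is_character_Sn chi -> forall s : 'S_n, chi s^-1%g = chi s.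
Proof.
move=> [m [_ [rho chiE]]] s; have [h <-] := perm_conj_invg s.
by rewrite !chiE mxtrace_repr_conjg ?in_setT.
Qed.

Lemma immanant_trmx (C : fieldType) (n : nat) (chi : 'S_n -> C) (M : 'M[C]_n) :
  (forall s : 'S_n, chi s^-1%g = chi s) -> immanant chi M^T = immanant chi M.
Proof.
move=> chiV; rewrite /immanant (reindex_inj invg_inj) /=.
apply: eq_bigr => s _; rewrite chiV; congr (_ * _).
rewrite [RHS](reindex_inj (@perm_inj _ s^-1)) /=.
by apply: eq_bigr => i _; rewrite mxE permKV.
Qed.

Theorem mainTheorem12 (C : numClosedFieldType) (n : nat) (hn : (1 <= n)%N)
  (chi : 'S_n -> C) (hchi : is_character_Sn chi)
  (A B : 'M[C]_n) (hA : symmetric_mx A) (hB : symmetric_mx B) :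
  immanant chi (A *m B) = immanant chi (B *m A).
Proof.
have -> : B *m A = (A *m B)^T by rewrite trmx_mul hA hB.
by rewrite immanant_trmx //; apply: character_Sn_invg.
Qed.
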